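(* Let $t\in\mathcal{N}$ and let $\Phi\triangleright\Gamma\vdash^{(b,e,m,f)}t:\sigma$ be a derivation in system $\mathscr{E}$ such that $\mathrm{tight}(\Gamma)$. Then $\sigma$ is tight and the last rule of $\Phi$ does not belong to $\{(\mathrm{app}),(\mathrm{abs}),(\mathrm{abs_p}),(\mathrm{pair}),(\mathrm{pair_p})\}$.
   Context: Pair pattern calculus: patterns $p,q ::= x\mid\langle p,q\rangle$ (linear); $\mathrm{var}(p)$ = variables of $p$; $p\# q$ means $\mathrm{var}(p)\cap\mathrm{var}(q)=\emptyset$. Terms $t,u ::= x\mid\lambda p.t\mid\langle t,u\rangle\mid t\,u\mid t[p/u]$, with $\mathrm{var}(p)$ bound in $t$ in $\lambda p.t$ and $t[p/u]$; terms modulo $\alpha$. Pure canonical forms: $\mathcal{N} ::= x\mid\mathcal{N}\,t\mid\mathcal{N}[\langle p_1,p_2\rangle/\mathcal{N}]$. System $\mathscr{E}$. Types: tight types $\mathtt{t} ::= \bullet_{\mathcal{N}}\mid\bullet_{\mathcal{M}}$; types $\sigma ::= \mathtt{t}\mid \mathcal{A}_1\times\mathcal{A}_2\mid \mathcal{A}\to\sigma$; multi-types $\mathcal{A} ::= [\sigma_k]_{k\in K}$ (finite multisets, possibly empty $[\,]$). Contexts map variables to multi-types, $\mathrm{dom}(\Gamma)$ = variables with non-empty multi-type; $\Gamma\wedge\Delta$ pointwise multiset union; $\Gamma|_p$ restriction to $\mathrm{var}(p)$; $\Gamma\setminus\mathrm{var}(p)$ removal. $\mathrm{tight}(\sigma)$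 iff $\sigma\in\{\bullet_{\mathcal{N}},\bullet_{\mathcal{M}}\}$, extended elementwise to multi-types and contexts. Rules: (pat_v) $x:\mathcal{A}\Vdash^{(1,0,0)} x:\mathcal{A}$. (pat_×) from $\Gamma\Vdash^{(e_p,m_p,f_p)}p:\mathcal{A}$, $\Delta\Vdash^{(e_q,m_q,f_q)}q:\mathcal{B}$, $p\#q$ infer $\Gamma\wedge\Delta\Vdash^{(e_p+e_q,1+m_p+m_q,f_p+f_q)}\langle p,q\rangle:[\mathcal{A}\times\mathcal{B}]$. (pat_p) if $\mathrm{dom}(\Gamma)\subseteq\mathrm{var}(\langle p,q\rangle)$ and $\mathrm{tight}(\Gamma)$ then $\Gamma\Vdash^{(0,0,1)}\langle p,q\rangle:[\bullet_{\mathcal{N}}]$. (ax) $x:[\sigma]\vdash^{(0,0,0,0)}x:\sigma$. (abs) from $\Gamma\vdash^{(b,e,m,f)}t:\sigma$ and $\Gamma|_p\Vdash^{(e_p,m_p,f_p)}p:\mathcal{A}$ infer $\Gamma\setminus\mathrm{var}(p)\vdash^{(b+1,e+e_p,m+m_p,f+f_p)}\lambda p.t:\mathcal{A}\to\sigma$. (abs_p) from $\Gamma\vdash^{(b,e,m,f)}t:\mathtt{t}$ ($\mathtt{t}$ tight) and $\mathrm{tight}(\Gamma|_p)$ infer $\Gamma\setminus\mathrm{var}(p)\vdash^{(b,e,m,f+1)}\lambda p.t:\bullet_{\mathcal{M}}$. (many) from $(\Gamma_k\vdash^{(b_k,e_k,m_k,f_k)}t:\sigma_k)_{k\in K}$ infer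 $\wedge_k\Gamma_k\vdash^{(\sum b_k,\sum e_k,\sum m_k,\sum f_k)}t:[\sigma_k]_{k\in K}$. (app) from $\Gamma\vdash^{(b_t,e_t,m_t,f_t)}t:\mathcal{A}\to\sigma$ and $\Delta\vdash^{(b_u,e_u,m_u,f_u)}u:\mathcal{A}$ infer $\Gamma\wedge\Delta\vdash^{(b_t+b_u,e_t+e_u,m_t+m_u,f_t+f_u)}t\,u:\sigma$. (app_p) from $\Gamma\vdash^{(b,e,m,f)}t:\bullet_{\mathcal{N}}$ infer $\Gamma\vdash^{(b,e,m,f+1)}t\,u:\bullet_{\mathcal{N}}$. (pair) from $\Gamma\vdash^{(b_t,e_t,m_t,f_t)}t:\mathcal{A}$ and $\Delta\vdash^{(b_u,e_u,m_u,f_u)}u:\mathcal{B}$ infer $\Gamma\wedge\Delta\vdash^{(b_t+b_u,e_t+e_u,m_t+m_u,f_t+f_u)}\langle t,u\rangle:\mathcal{A}\times\mathcal{B}$. (pair_p) $\vdash^{(0,0,0,1)}\langle t,u\rangle:\bullet_{\mathcal{M}}$. (match) from $\Gamma\vdash^{(b_t,e_t,m_t,f_t)}t:\sigma$, $\Gamma|_p\Vdash^{(e_p,m_p,f_p)}p:\mathcal{A}$, $\Delta\vdash^{(b_u,e_u,m_u,f_u)}u:\mathcal{A}$ infer $(\Gamma\setminus\mathrm{var}(p))\wedge\Delta\vdash^{(b_t+b_u,e_t+e_u+e_p,m_t+m_u+m_p,f_t+f_u+f_p)}t[p/u]:\sigma$. *)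

From Stdlib Require Import Arith List.
Import ListNotations.

Definition var := nat.

Inductive pat : Type :=
| PVar : var -> pat
| PPair : pat -> pat -> pat.

Fixpoint pvars (p : pat) : list var :=
  match p with
  | PVar x => [x]
  | PPair p q => pvars p ++ pvars q
  end.

Definition pdisj (p q : pat) : Prop :=
  forall x, In x (pvars p) -> ~ In x (pvars q).

Fixpoint linear (p : pat) : Prop :=
  match p with
  | PVar _ => True
  | PPair p q => linear p /\ linear q /\ pdisj p q
  end.

Inductive term : Type :=
| Var : var -> term
| Lam : pat -> term -> term
| Pair : term -> term -> term
| App : term -> term -> term
| Sub : term -> pat -> term -> term.   (* Sub t p u  =  t[p/u] *)

Fixpoint wf_term (t : term) : Prop :=
  match t with
  | Var _ => True
  | Lam p t => linear p /\ wf_term t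
  | Pair t u => wf_term t /\ wf_term u
  | App t u => wf_term t /\ wf_term u
  | Sub t p u => wf_term t /\ linear p /\ wf_term u
  end.

Inductive canN : term -> Prop :=
| cn_var : forall x, canN (Var x)
| cn_app : forall n t, canN n -> canN (App n t)
| cn_sub : forall n p1 p2 n', canN n -> canN n' -> canN (Sub n (PPair p1 p2) n').

(* Types; multi-types are represented by lists, compared up to
   (deep) multiset equivalence [mty_eq]. *)
Inductive ty : Type :=
| TN : ty
| TM : ty
| TProd : list ty -> list ty -> ty
| TArr : list ty -> ty -> ty.

Definition mty := list ty.

Inductive ty_eq : ty -> ty -> Prop :=
| teq_N : ty_eq TN TN
| teq_M : ty_eq TM TM
| teq_prod : forall A1 A2 B1 B2,
    mty_eq A1 B1 -> mty_eq A2 B2 -> ty_eq (TProd A1 A2) (TProd B1 B2)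
| teq_arr : forall A B s s',
    mty_eq A B -> ty_eq s s' -> ty_eq (TArr A s) (TArr B s')
with mty_eq : mty -> mty -> Prop :=
| meq_nil : mty_eq [] []
| meq_cons : forall x A y B1 B2,
    ty_eq x y -> mty_eq A (B1 ++ B2) -> mty_eq (x :: A) (B1 ++ y :: B2).

Definition tight (s : ty) : Prop := s = TN \/ s = TM.
Definition tight_mty (A : mty) : Prop := Forall tight A.

Definition ctx := var -> mty.
Definition empty_ctx : ctx := fun _ => [].
Definition single (x : var) (A : mty) : ctx :=
  fun y => if Nat.eqb y x then A else [].
Definition cunion (G D : ctx) : ctx := fun x => G x ++ D x.
Definition restr (G : ctx) (p : pat) : ctx :=
  fun x => if in_dec Nat.eq_dec x (pvars p) then G x else [].
Definition remove (G : ctx) (p : pat) : ctx :=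
  fun x => if in_dec Nat.eq_dec x (pvars p) then [] else G x.
Definition ctx_eq (G D : ctx) : Prop := forall x, mty_eq (G x) (D x).
Definition tight_ctx (G : ctx) : Prop := forall x, tight_mty (G x).
Definition dom_sub (G : ctx) (p : pat) : Prop :=
  forall x, G x <> [] -> In x (pvars p).

Inductive ptyp : ctx -> pat -> mty -> nat -> nat -> nat -> Prop :=
| pat_v : forall x A, ptyp (single x A) (PVar x) A 1 0 0
| pat_x : forall G D p q A B ep mp fp eq mq fq,
    ptyp G p A ep mp fp -> ptyp D q B eq mq fq -> pdisj p q ->
    ptyp (cunion G D) (PPair p q) [TProd A B] (ep + eq) (1 + mp + mq) (fp + fq)
| pat_p : forall G p q,
    dom_sub G (PPair p q) -> tight_ctx G ->
    ptyp G (PPair p q) [TN] 0 0 1.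

(* Term typing  G |-^(b,e,m,f) t : sigma  (derivations are data) and
   the multi-type judgment built by rule (many). *)
Inductive typ : ctx -> term -> ty -> nat -> nat -> nat -> nat -> Type :=
| r_ax : forall x s, typ (single x [s]) (Var x) s 0 0 0 0
| r_abs : forall G G' t s p A b e m f ep mp fp,
    typ G t s b e m f -> ptyp G' p A ep mp fp -> ctx_eq G' (restr G p) ->
    typ (remove G p) (Lam p t) (TArr A s) (b + 1) (e + ep) (m + mp) (f + fp)
| r_abs_p : forall G t s p b e m f,
    typ G t s b e m f -> tight s -> tight_ctx (restr G p) ->
    typ (remove G p) (Lam p t) TM b e m (f + 1)
| r_app : forall G D t u A A' s bt et mt ft bu eu mu fu,
    typ G t (TArr A s) bt et mt ft -> mtyp D u A' bu eu mu fu -> mty_eq A A' ->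
    typ (cunion G D) (App t u) s (bt + bu) (et + eu) (mt + mu) (ft + fu)
| r_app_p : forall G t u b e m f,
    typ G t TN b e m f -> typ G (App t u) TN b e m (f + 1)
| r_pair : forall G D t u A B bt et mt ft bu eu mu fu,
    mtyp G t A bt et mt ft -> mtyp D u B bu eu mu fu ->
    typ (cunion G D) (Pair t u) (TProd A B) (bt + bu) (et + eu) (mt + mu) (ft + fu)
| r_pair_p : forall t u, typ empty_ctx (Pair t u) TM 0 0 0 1
| r_match : forall G G' D t p u s A A' bt et mt ft ep mp fp bu eu mu fu,
    typ G t s bt et mt ft -> ptyp G' p A ep mp fp -> ctx_eq G' (restr G p) ->
    mtyp D u A' bu eu mu fu -> mty_eq A A' ->
    typ (cunion (remove G p) D) (Sub t p u) s
        (bt + bu) (et + eu + ep) (mt + mu + mp) (ft + fu + fp)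
with mtyp : ctx -> term -> mty -> nat -> nat -> nat -> nat -> Type :=
| many_nil : forall t, mtyp empty_ctx t [] 0 0 0 0
| many_cons : forall G D t s A b e m f b' e' m' f',
    typ G t s b e m f -> mtyp D t A b' e' m' f' ->
    mtyp (cunion G D) t (s :: A) (b + b') (e + e') (m + m') (f + f').

Inductive rule_name : Type :=
  R_ax | R_abs | R_abs_p | R_app | R_app_p | R_pair | R_pair_p | R_match.

Definition last_rule {G t s b e m f} (d : typ G t s b e m f) : rule_name :=
  match d with
  | r_ax _ _ => R_ax
  | r_abs _ _ _ _ _ _ _ _ _ _ _ _ _ _ _ _ => R_abs
  | r_abs_p _ _ _ _ _ _ _ _ _ _ _ => R_abs_p
  | r_app _ _ _ _ _ _ _ _ _ _ _ _ _ _ _ _ _ _ => R_app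
  | r_app_p _ _ _ _ _ _ _ _ => R_app_p
  | r_pair _ _ _ _ _ _ _ _ _ _ _ _ _ _ _ _ => R_pair
  | r_pair_p _ _ => R_pair_p
  | r_match _ _ _ _ _ _ _ _ _ _ _ _ _ _ _ _ _ _ _ _ _ _ _ _ _ => R_match
  end.

(** A variable receives its type from
    the (tight) context.  In [n u] the head [n] has a tight type, hence not an
    arrow, so rule (app) is impossible and (app_p) yields [bullet_N].  In
    [n[<p1,p2>/n']] the argument [n'] gets a tight multi-type, so the pair
    pattern cannot be typed by (pat_x), whose product type is not tight; it is
    therefore typed by (pat_p), which only binds tight types.  The context of
    [n] is then tight and the induction hypothesis applies to it.  Rules (abs),
    (abs_p), (pair) and (pair_p) type terms that are not canonical forms. *)

From Pilot Require Import Defs.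
From Stdlib Require Import List Arith.
Import ListNotations.

Lemma not_tight_arr (A : mty) (s : ty) : ~ tight (TArr A s).
Proof. intros [H | H]; discriminate. Qed.

Lemma ty_eq_tight (x y : ty) : ty_eq x y -> tight x <-> tight y.
Proof.
  intros Hxy; split; intros [-> | ->]; inversion Hxy; subst;
    [left | right | left | right]; reflexivity.
Qed.

Lemma mty_eq_tight (A B : mty) : mty_eq A B -> tight_mty A <-> tight_mty B.
Proof.
  unfold tight_mty; induction 1 as [| x A y B1 B2 Hxy _ IH].
  - reflexivity.
  - rewrite Forall_cons_iff, (ty_eq_tight _ _ Hxy), IH,
      !Forall_app, Forall_cons_iff.
    tauto.
Qed.

Lemma ctx_eq_tight (G D : ctx) : ctx_eq G D -> tight_ctx G -> tight_ctx D.
Proof. intros HGD HG x; apply (mty_eq_tight _ _ (HGD x)), HG. Qed.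

Lemma tight_ctx_cunion (G D : ctx) :
  tight_ctx (cunion G D) <-> tight_ctx G /\ tight_ctx D.
Proof.
  unfold tight_ctx, tight_mty, cunion; split.
  - intros H; split; intros x; specialize (H x); rewrite Forall_app in H; tauto.
  - intros [HG HD] x; rewrite Forall_app; auto.
Qed.

Lemma tight_ctx_single (x : var) (A : mty) :
  tight_mty A -> tight_ctx (single x A).
Proof.
  intros HA y; unfold single; destruct (Nat.eqb y x); [exact HA | constructor].
Qed.

Lemma tight_ctx_restr_remove (G : ctx) (p : pat) :
  tight_ctx (restr G p) -> tight_ctx (Defs.remove G p) -> tight_ctx G.
Proof.
  intros Hin Hout x; specialize (Hin x); specialize (Hout x).
  unfold restr, Defs.remove in *; destruct (in_dec _ _ _); assumption.
Qed.

(* Rule (pat_x) is excluded because its product type is not tight. *)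
Lemma ptyp_tight_ctx (G : ctx) (p : pat) (A : mty) (e m f : nat) :
  ptyp G p A e m f -> tight_mty A -> tight_ctx G.
Proof.
  destruct 1 as [x A | G D p q A B ? ? ? ? ? ? _ _ _ | G p q _ HG]; intros HA.
  - exact (tight_ctx_single x A HA).
  - inversion HA as [| ? ? [H | H] _]; discriminate.
  - exact HG.
Qed.

Lemma mtyp_tight (t : term) :
  (forall G s b e m f, typ G t s b e m f -> tight_ctx G -> tight s) ->
  forall D A b e m f, mtyp D t A b e m f -> tight_ctx D -> tight_mty A.
Proof.
  intros Ht D A b e m f Phi.
  induction Phi as [| G D t' s A ? ? ? ? ? ? ? ? Phi_s _ IH]; intros HD.
  - constructor.
  - apply tight_ctx_cunion in HD as [HG HD].
    constructor; [exact (Ht _ _ _ _ _ _ Phi_s HG) | exact (IH Ht HD)].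
Qed.

Lemma canN_typ_tight (t : term) : canN t ->
  forall G s b e m f, typ G t s b e m f -> tight_ctx G -> tight s.
Proof.
  induction 1 as [x | n u _ IHn | n p1 p2 n' _ IHn _ IHn'];
    intros G0 s0 b0 e0 m0 f0 Phi HG0; inversion Phi; subst.
  - specialize (HG0 x); unfold single in HG0; rewrite Nat.eqb_refl in HG0.
    inversion HG0; assumption.
  - apply tight_ctx_cunion in HG0 as [HG _].
    exfalso; eapply not_tight_arr, IHn; eassumption.
  - left; reflexivity.
  - apply tight_ctx_cunion in HG0 as [Hrem HD].
    assert (HA : tight_mty A).
    { apply (mty_eq_tight A A'); [assumption |].
      eapply (mtyp_tight n' IHn'); eassumption. }
    assert (HG : tight_ctx G).
    { apply (tight_ctx_restr_remove G (PPair p1 p2)); [| exact Hrem].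
      eapply ctx_eq_tight; [eassumption |].
      eapply ptyp_tight_ctx; eassumption. }
    eapply IHn; eassumption.
Qed.

Theorem lemma3 : forall (G : ctx) (t : term) (s : ty) (b e m f : nat)
  (Phi : typ G t s b e m f),
  wf_term t -> canN t -> tight_ctx G ->
  tight s /\ ~ In (last_rule Phi) [R_app; R_abs; R_abs_p; R_pair; R_pair_p].
Proof.
  intros G t s b e m f Phi _ Hcan HG.
  split; [exact (canN_typ_tight t Hcan G s b e m f Phi HG) |].
  destruct Phi as [| | | G D t u A A' s ? ? ? ? ? ? ? ? Phi_t | | | |];
    simpl; try (inversion Hcan; fail); try (intuition discriminate).
  inversion Hcan as [| ? ? Hcan_t |]; subst.
  apply tight_ctx_cunion in HG as [HG _].
  exfalso; exact (not_tight_arr A s (canN_typ_tight t Hcan_t G _ _ _ _ _ Phi_t HG)).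
Qed.
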